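(* Consider one step of the perturbed FEAST iteration with $p<n$ and $m\le p$. Suppose $$Q_{k-1}=[\,(X_m+X_p'E_{k-1}+X_m'F_{k-1})L_{k-1}^{-1}\;\;V_{k-1}\,]\,U_{k-1}$$ where: - $U_{k-1}$ ($p\times p$) and $L_{k-1}$ ($m\times m$) are invertible; - $E_{k-1}$ is $(n-p)\times m$, $F_{k-1}$ is $(n-m)\times m$, and $V_{k-1}$ is $n\times(p-m)$. Define $\xi_{k-1}$ ($m\times m$), $\zeta_{k-1}$ ($(n-m)\times m$) and $\psi_{k-1}$ ($n\times(p-m)$) by $$X^{-1}\Delta_{k-1}U_{k-1}^{-1}\begin{bmatrix}L_{k-1}&0\\0&I_{p-m}\end{bmatrix}=\begin{bmatrix}\xi_{k-1}&\\ \zeta_{k-1}&\psi_{k-1}\end{bmatrix},$$ i.e. the first $m$ columns are $\begin{bmatrix}\xi_{k-1}\\ \zeta_{k-1}\end{bmatrix}$ and the last $p-m$ columns are $\psi_{k-1}$. If $\Gamma_m+\xi_{k-1}$ is invertible and $Y_k=\rho(M)Q_{k-1}+\Delta_{k-1}$ has full column rank, then $$Q_k=[\,(X_m+X_p'E_k+X_m'F_k)L_k^{-1}\;\;V_k\,]\,U_k$$ for some unitary $U_k$ and some $n\times(p-m)$ matrix $V_k$. Here: - $L_k$ satisfies $L_k^*L_k=(X_m+X_p'E_k+X_m'F_k)^*B(X_m+X_p'E_k+X_m'F_k)$; - $\|L_k\|\le(1+(\|E_k\|+\|F_k\|)^2)^{1/2}$; - $E_k=\Gamma_p'E_{k-1}(\Gamma_m+\xi_{k-1})^{-1}$;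 - $F_k=\Gamma_m'F_{k-1}(\Gamma_m+\xi_{k-1})^{-1}+\zeta_{k-1}(\Gamma_m+\xi_{k-1})^{-1}$.
   Context: Standing setup. - $A,B$ are Hermitian $n\times n$ matrices, $B$ positive definite, $B=C^*C$ with $C$ invertible. - $X=[x_1,\dots,x_n]$ satisfies $X^*BX=I$ and $AX=BX\Lambda$, with $\Lambda$ real diagonal; $M=B^{-1}A$. - $\rho$ is the Gauss–Legendre rational filter for an interval $[\lambda_-,\lambda_+]$: with $c,r$ its center and radius, $\phi_k=c+re^{\iota\frac\pi2(1+t_k)}$ and $\omega_k=w_k\frac{\iota\pi r}{2}e^{\iota\frac\pi2(1+t_k)}/(2\pi\iota)$ for the $q$-point Gauss–Legendre pairs $(w_k,t_k)$, define $\rho(\mu)=\sum_k\big(\frac{\omega_k}{\phi_k-\mu}+\frac{\overline{\omega_k}}{\overline{\phi_k}-\mu}\big)$. - $\rho(M)=\sum_k(\omega_k(\phi_kI-M)^{-1}+\overline{\omega_k}(\overline{\phi_k}I-M)^{-1})=X\rho(\Lambda)X^{-1}$. - $\gamma_j=\rho(\lambda_j)$ (real), with eigenpairs numbered so that $|\gamma_1|\ge\cdots\ge|\gamma_n|$. Block notation: $X_\ell=[x_1,\dots,x_\ell]$, $X_\ell'=[x_{\ell+1},\dots,x_n]$, $\Gamma_\ell=\mathrm{diag}(\gamma_1,\dots,\gamma_\ell)$, $\Gamma_\ell'=\mathrm{diag}(\gamma_{\ell+1},\dots,\gamma_n)$. $\|\cdot\|$ is the spectral norm. Perturbed FEAST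 step: $Y_k=\rho(M)Q_{k-1}+\Delta_{k-1}$ for an $n\times p$ error matrix $\Delta_{k-1}$; $\widehat A_k=Y_k^*AY_k$, $\widehat B_k=Y_k^*BY_k$; $\widehat A_k\widehat X_k=\widehat B_k\widehat X_k\widehat\Lambda_k$ with $\widehat\Lambda_k$ diagonal and $\widehat X_k^*\widehat B_k\widehat X_k=I_p$; $Q_k=Y_k\widehat X_k$. *)

From HB Require Import structures.
From mathcomp Require Import all_boot all_order all_algebra.
From Stdlib Require Import ClassicalEpsilon.
Set Implicit Arguments. Unset Strict Implicit. Unset Printing Implicit Defensive.
Import Order.TTheory GRing.Theory Num.Theory.
Local Open Scope ring_scope.
Local Open Scope sesquilinear_scope.

Section Defs.
Variable C : numClosedFieldType.

Definition adj m n (A : 'M[C]_(m, n)) : 'M[C]_(n, m) := A ^t*.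

Definition vnorm2 n (x : 'cV[C]_n) : C := \sum_i `|x i 0| ^+ 2.

Definition is_specnorm m n (A : 'M[C]_(m, n)) (s : C) : Prop :=
  [/\ 0 <= s,
      (forall x : 'cV[C]_n, vnorm2 (A *m x) <= s ^+ 2 * vnorm2 x) &
      (forall t : C, 0 <= t ->
         (forall x : 'cV[C]_n, vnorm2 (A *m x) <= t ^+ 2 * vnorm2 x) -> s <= t)].

(* the spectral norm ||A|| (it exists and is unique) *)
Definition specnorm m n (A : 'M[C]_(m, n)) : C :=
  epsilon (inhabits 0) (is_specnorm A).

(* the rk x ck submatrix of A whose top-left entry is A r0 c0 (0-based);
   entries outside A are 0 (never used when the block fits). *)
Definition subblk r c (r0 c0 rk ck : nat) (A : 'M[C]_(r, c)) : 'M[C]_(rk, ck) :=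
  \matrix_(i < rk, j < ck)
     (match insub (r0 + i), insub (c0 + j) with
      | Some i', Some j' => A i' j'
      | _, _ => 0 end).

(* diagonal block diag(g_(off+1), ..., g_(off+k)) (0-based offset) *)
Definition diagblk n (off k : nat) (g : 'I_n -> C) : 'M[C]_k :=
  diag_mx (\row_(j < k) (if insub (off + j) is Some j' then g j' else 0)).

Definition rho q (phi om : 'I_q -> C) (mu : C) : C :=
  \sum_(k < q) (om k / (phi k - mu) + (om k)^* / ((phi k)^* - mu)).

Definition rhoM q n (phi om : 'I_q -> C) (M : 'M[C]_n) : 'M[C]_n :=
  \sum_(k < q) (om k *: invmx (phi k *: 1%:M - M)
                + (om k)^* *: invmx ((phi k)^* *: 1%:M - M)).

End Defs.

From HB Require Import structures.
From mathcomp Require Import all_boot all_order all_algebra.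
From Stdlib Require Import ClassicalEpsilon.
From mathcomp Require Import ring.
Set Implicit Arguments. Unset Strict Implicit. Unset Printing Implicit Defensive.
Import Order.TTheory GRing.Theory Num.Theory.
Local Open Scope ring_scope.
Local Open Scope sesquilinear_scope.

(* Work in the coordinates of the B-orthonormal eigenbasis X.  The column
   blocks X_m, X_p', X_m' are X times the "selection matrices" sel N c0 k,
   whose columns are the unit vectors e_(c0+1), ..., e_(c0+k).  Since
   rho(M) = X rho(Lambda) X^-1, a direct block computation shows that, for
   the right p x m matrix e,
       Y e = (X_m + X_p' E_k + X_m' F_k) (Gamma_m + xi_(k-1)) = W (Gamma_m + xi),
   so W = Q_k c for some p x m matrix c, where Q_k = Y Xh is B-orthonormal.
   A thin polar/QR factorisation c = S^* L (S with orthonormal rows, completed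
   to a unitary U) then gives Q_k = [W L^-1, V] U with L^* L = W^* B W.
   Finally L^* L = C^* C for the coordinates C of W = X C in the eigenbasis;
   the identity block of C occupies rows disjoint from those of its E_k and
   F_k blocks, whence ||L|| = ||C|| <= (1 + (||E_k|| + ||F_k||)^2)^(1/2). *)

Section SelectionMatrices.
Variable C : numClosedFieldType.

Definition sel (N c0 k : nat) : 'M[C]_(N, k) :=
  \matrix_(i < N, j < k) ((i == (c0 + j)%N :> nat)%:R).

Lemma sum_delta_nat N k (f : 'I_N -> C) :
  \sum_(a < N) ((a == k :> nat)%:R * f a) = if insub k is Some a then f a else 0.
Proof.
case: insubP => [a _ <-|hk].
  rewrite (bigD1 a) //= eqxx mul1r big1 ?addr0 // => b /negPf.
  by rewrite -val_eqE /= => ->; rewrite mul0r.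
rewrite big1 // => b _; case: eqP => [e|]; last by rewrite mul0r.
by move: hk; rewrite -e ltn_ord.
Qed.

Lemma subblkE r c r0 c0 rk ck (A : 'M[C]_(r, c)) :
  subblk r0 c0 rk ck A = (sel r r0 rk)^T *m A *m sel c c0 ck.
Proof.
apply/matrixP => i j; rewrite !mxE.
under eq_bigr do rewrite !mxE mulrC.
rewrite sum_delta_nat.
case: (insub (c0 + j)%N : option 'I_c) => [b|]; last first.
  by case: (insub (r0 + i)%N : option 'I_r).
under eq_bigr do rewrite !mxE.
by rewrite sum_delta_nat; case: (insub (r0 + i)%N : option 'I_r).
Qed.

Lemma subblk_cols N c c0 k (A : 'M[C]_(N, c)) :
  subblk 0 c0 N k A = A *m sel c c0 k.
Proof.
rewrite subblkE.
have -> : sel N 0 N = 1%:M by apply/matrixP => i j; rewrite !mxE.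
by rewrite trmx1 mul1mx.
Qed.

Lemma diag_sel N off k (g : 'I_N -> C) :
  diag_mx (\row_i g i) *m sel N off k = sel N off k *m diagblk off k g.
Proof.
rewrite /diagblk mul_diag_mx mul_mx_diag; apply/matrixP => i j; rewrite !mxE.
case: eqP => [e|]; last by rewrite mulr0 mul0r.
have hlt : ((off + j)%R < N)%N by rewrite -[(off + j)%R]/(off + j)%N -e ltn_ord.
by rewrite insubT /= mulr1 mul1r; congr g; apply/val_inj.
Qed.

Lemma selTsel N a k b l :
  (sel N a k)^T *m sel N b l =
  \matrix_(i, j) (((a + i == b + j)%N && (a + i < N)%N)%:R : C).
Proof.
apply/matrixP => i j; rewrite !mxE.
under eq_bigr do rewrite !mxE.
rewrite sum_delta_nat; case: insubP => [c _ ec|hc].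
  by rewrite -ec ltn_ord andbT.
by rewrite (negPf hc) andbF.
Qed.

Lemma selTsel1 N a k : (a + k <= N)%N -> (sel N a k)^T *m sel N a k = 1%:M.
Proof.
move=> h; rewrite selTsel; apply/matrixP => i j; rewrite !mxE eqn_add2l.
by rewrite (leq_trans _ h) ?ltn_add2l // andbT.
Qed.

Lemma selTsel0 N a k b l : (a + k <= b)%N -> (sel N a k)^T *m sel N b l = 0.
Proof.
move=> h; rewrite selTsel; apply/matrixP => i j; rewrite !mxE.
suff -> : (a + i == b + j)%N = false by [].
apply/negbTE; rewrite neq_ltn (leq_trans _ (leq_addr j b)) //.
by apply: leq_trans h; rewrite ltn_add2l.
Qed.

Lemma selselT N c0 k :
  sel N c0 k *m (sel N c0 k)^T =
  \matrix_(i, j) (((i == j) && (c0 <= i < c0 + k)%N)%:R : C).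
Proof.
apply/matrixP => i j; rewrite !mxE.
under eq_bigr do rewrite !mxE.
case: (boolP ((c0 <= i < c0 + k)%N)) => [/andP[h1 h2]|hi].
  have h : (i - c0 < k)%N by rewrite ltn_subLR.
  rewrite (bigD1 (Ordinal h)) //= subnKC // eqxx mul1r andbT big1 ?addr0.
    by rewrite eq_sym.
  move=> a; rewrite -val_eqE /= => ha; case: eqP => [e|]; last by rewrite mul0r.
  by move: ha; rewrite e addKn eqxx.
rewrite andbF big1 // => a _; case: eqP => [e|]; last by rewrite mul0r.
by move: hi; rewrite e leq_addr ltn_add2l ltn_ord.
Qed.

Lemma sel_split N m :
  (m <= N)%N ->
  sel N 0 m *m (sel N 0 m)^T + sel N m (N - m) *m (sel N m (N - m))^T = 1%:M.
Proof.
move=> h; rewrite !selselT; apply/matrixP => i j; rewrite !mxE subnKC //.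
rewrite ltn_ord andbT leq0n /=.
case: eqP => _ /=; last by rewrite addr0.
by case: (ltnP i m) => _ /=; rewrite ?addr0 ?add0r.
Qed.

Lemma selC N a k : (sel N a k)^t* = (sel N a k)^T.
Proof. by apply/matrixP => i j; rewrite !mxE; case: eqP; rewrite ?conjC1 ?conjC0. Qed.

Lemma first_block_columns n m r p (hp : (m + r)%N = p)
    (P : 'M[C]_(n, m)) (V : 'M_(n, r)) (L : 'M_m) :
  castmx (erefl n, hp) (row_mx P V) *m castmx (hp, hp) (block_mx L 0 0 1%:M)
  *m sel p 0 m = P *m L.
Proof.
case: p / hp; rewrite !castmx_id mul_row_block.
have -> : sel (m + r) 0 m = col_mx 1%:M 0.
  apply/matrixP => i j; rewrite !mxE; case: splitP => k ek; rewrite !mxE ek //.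
  by rewrite eqn_leq leqNgt (leq_trans (ltn_ord j) (leq_addr k m)).
by rewrite mul_row_col !mulmx0 addr0 mulmx1 addr0.
Qed.

End SelectionMatrices.
Arguments sel {C}.

Section Adjoint.
Variable C : numClosedFieldType.

Lemma adjM a b c (A : 'M[C]_(a, b)) (B : 'M[C]_(b, c)) :
  adj (A *m B) = adj B *m adj A.
Proof. by rewrite /adj trmx_mul map_mxM. Qed.

Lemma adjK a b (A : 'M[C]_(a, b)) : adj (adj A) = A.
Proof. exact: trmxCK. Qed.

Lemma adj0 a b : adj (0 : 'M[C]_(a, b)) = 0.
Proof. by rewrite /adj trmx0 (map_mx0 Num.Def.conjC). Qed.

Lemma gram_mul a b c (H : 'M[C]_a) (A : 'M[C]_(a, b)) (K : 'M[C]_(b, c)) :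
  adj (A *m K) *m H *m (A *m K) = adj K *m (adj A *m H *m A) *m K.
Proof. by rewrite adjM !mulmxA. Qed.

End Adjoint.

Section EuclideanNorm.
Variable C : numClosedFieldType.

Lemma vnorm2E n (x : 'cV[C]_n) : vnorm2 x = (x^t* *m x) 0 0.
Proof. by rewrite /vnorm2 mxE; apply: eq_bigr => i _; rewrite !mxE normCK mulrC. Qed.

Lemma vnorm2_ge0 n (x : 'cV[C]_n) : 0 <= vnorm2 x.
Proof. by apply: sumr_ge0 => i _; rewrite exprn_ge0. Qed.

Lemma vnorm2_eq0 n (x : 'cV[C]_n) : vnorm2 x = 0 -> x = 0.
Proof.
move=> /eqP; rewrite /vnorm2 psumr_eq0 => [/allP h|i _]; last by rewrite exprn_ge0.
apply/matrixP => i j; rewrite ord1 mxE; have := h i (mem_index_enum i).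
by rewrite implyTb expf_eq0 normr_eq0 => /andP[_ /eqP].
Qed.

Lemma vnorm2_gram a b c (K : 'M[C]_(a, c)) (L : 'M[C]_(b, c)) (x : 'cV[C]_c) :
  adj L *m L = adj K *m K -> vnorm2 (L *m x) = vnorm2 (K *m x).
Proof.
move=> LK; rewrite !vnorm2E !trmx_mul !map_mxM -!mulmxA.
rewrite (mulmxA (L^t*)) (mulmxA (K^t*)).
by change (L^t* *m L) with (adj L *m L); rewrite LK.
Qed.

Lemma vnorm2_unitary n (P : 'M[C]_n) (x : 'cV[C]_n) :
  P \is unitarymx -> vnorm2 (P *m x) = vnorm2 x.
Proof.
move=> /unitarymxP /mulmx1C Pu; rewrite (@vnorm2_gram _ _ _ 1%:M P x) ?mul1mx //.
by rewrite /adj trmx1 map_mx1 mul1mx.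
Qed.

Lemma vnorm2_sel N a k (y : 'cV[C]_k) :
  (a + k <= N)%N -> vnorm2 (sel N a k *m y) = vnorm2 y.
Proof.
move=> h; rewrite (@vnorm2_gram _ _ _ 1%:M (sel N a k) y) ?mul1mx //.
by rewrite /adj selC selTsel1 // trmx1 map_mx1 mulmx1.
Qed.

Lemma vnorm2_orth k (u v : 'cV[C]_k) :
  u^t* *m v = 0 -> vnorm2 (u + v) = vnorm2 u + vnorm2 v.
Proof.
move=> h; have h' : v^t* *m u = 0 by have := congr1 (fun A => adj A) h; rewrite /= adjM adjK adj0.
have ht : (u + v)^t* = u^t* + v^t* by apply/matrixP => i j; rewrite !mxE rmorphD.
by rewrite !vnorm2E ht mulmxDl !mulmxDr h h' addr0 add0r mxE.
Qed.

Definition cross k (u v : 'cV[C]_k) : C :=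
  \sum_i (u i 0 * (v i 0)^* + v i 0 * (u i 0)^*).

Lemma vnorm2D k (u v : 'cV[C]_k) :
  vnorm2 (u + v) = vnorm2 u + vnorm2 v + cross u v.
Proof.
rewrite /vnorm2 /cross -!big_split /=; apply: eq_bigr => i _.
by rewrite !mxE !normCK rmorphD; ring.
Qed.

(* Expanding ||b u - a v||^2 >= 0 bounds the cross term (real a, b). *)
Lemma cross_le k (u v : 'cV[C]_k) (a b : C) :
  a \is Num.real -> b \is Num.real ->
  a * b * cross u v <= b ^+ 2 * vnorm2 u + a ^+ 2 * vnorm2 v.
Proof.
move=> /CrealP ac /CrealP bc; rewrite -subr_ge0.
have -> : b ^+ 2 * vnorm2 u + a ^+ 2 * vnorm2 v - a * b * cross u v
          = vnorm2 (b *: u - a *: v).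
  rewrite /vnorm2 /cross !mulr_sumr -sumrN -!big_split /=; apply: eq_bigr => i _.
  by rewrite !mxE !normCK rmorphB !rmorphM /= ac bc; ring.
exact: vnorm2_ge0.
Qed.

(* Triangle inequality, in squared form relative to a common scale w. *)
Lemma vnorm2_add k (u v : 'cV[C]_k) (a b w : C) :
  0 <= a -> 0 <= b -> 0 <= w ->
  vnorm2 u <= a ^+ 2 * w -> vnorm2 v <= b ^+ 2 * w ->
  vnorm2 (u + v) <= (a + b) ^+ 2 * w.
Proof.
move=> a0 b0 w0 hu hv.
have vanish (x : 'cV[C]_k) : vnorm2 x <= 0 ^+ 2 * w -> x = 0.
  by rewrite expr0n mul0r => hx; apply/vnorm2_eq0/le_anti; rewrite hx vnorm2_ge0.
have [az|an0] := eqVneq a 0; first by move: hu; rewrite az => /vanish ->; rewrite !add0r.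
have [bz|bn0] := eqVneq b 0; first by move: hv; rewrite bz => /vanish ->; rewrite !addr0.
have ab0 : 0 < a * b by rewrite mulr_gt0 // lt_def ?an0 ?bn0.
have hc : cross u v <= 2 * a * b * w.
  rewrite -(ler_pM2l ab0); apply: le_trans (cross_le u v (ger0_real a0) (ger0_real b0)) _.
  have -> : a * b * (2 * a * b * w) = b ^+ 2 * (a ^+ 2 * w) + a ^+ 2 * (b ^+ 2 * w).
    by ring.
  by apply: lerD; apply: ler_wpM2l; rewrite ?exprn_ge0.
have -> : (a + b) ^+ 2 * w = a ^+ 2 * w + b ^+ 2 * w + 2 * a * b * w by ring.
by rewrite vnorm2D !lerD.
Qed.

End EuclideanNorm.

Section SpectralNorm.
Variable C : numClosedFieldType.

Lemma exists_max n (f : 'I_n.+1 -> C) :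
  (forall i, f i \is Num.real) -> exists k, forall i, f i <= f k.
Proof.
move=> fr.
suff [k hk] : exists k, forall i, i \in enum 'I_n.+1 -> f i <= f k.
  by exists k => i; apply: hk; rewrite mem_enum.
elim: (enum _) => [|a s [k hk]]; first by exists ord0.
case/orP: (real_leVge (fr a) (fr k)) => h.
  by exists k => i; rewrite inE => /orP[/eqP->//|]; apply: hk.
exists a => i; rewrite inE => /orP[/eqP->//|/hk hi]; exact: le_trans hi h.
Qed.

Lemma quad_diag n (z : 'cV[C]_n) (d : 'rV[C]_n) :
  (z^t* *m diag_mx d *m z) 0 0 = \sum_i d 0 i * `|z i 0| ^+ 2.
Proof.
rewrite mul_mx_diag !mxE; apply: eq_bigr => i _; rewrite !mxE normCK.
by ring.
Qed.

(* ||A|| exists: it is the square root of the largest eigenvalue of A^* A,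
   computed through the spectral decomposition A^* A = P^* diag(d) P. *)
Lemma specnorm_exists m n (A : 'M[C]_(m, n)) : exists s, is_specnorm A s.
Proof.
case: n A => [|n] A.
  exists 0; split => // x.
  by rewrite (thinmx0 A) mul0mx vnorm2E mulmx0 mxE expr0n /= !mul0r.
set H := A^t* *m A.
have /orthomx_spectralP : H \is normalmx.
  by apply/normalmxP; have -> : H^t* = H by rewrite /H trmx_mul map_mxM trmxCK.
set P := spectralmx H; set d := spectral_diag H => HE.
have Pu : P \is unitarymx := spectral_unitarymx H.
rewrite invmx_unitary // in HE.
have quad x : vnorm2 (A *m x) = \sum_i d 0 i * `|(P *m x) i 0| ^+ 2.
  rewrite -quad_diag vnorm2E trmx_mul map_mxM -mulmxA (mulmxA (A^t*)) -/H HE.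
  by rewrite trmx_mul map_mxM !mulmxA.
have eig k : vnorm2 (A *m (P^t* *m delta_mx k 0)) = d 0 k.
  rewrite quad (mulmxA P) (unitarymxP Pu) mul1mx (bigD1 k) //= !mxE !eqxx /=.
  rewrite normr1 expr1n mulr1 big1 ?addr0 // => i /negPf.
  by rewrite !mxE => ->; rewrite normr0 expr0n mulr0.
have dge0 k : 0 <= d 0 k by rewrite -eig vnorm2_ge0.
have [k hk] := @exists_max _ (fun i => d 0 i) (fun i => ger0_real (dge0 i)).
exists (sqrtC (d 0 k)); split; first by rewrite sqrtC_ge0.
  move=> x; rewrite quad sqrtCK -(vnorm2_unitary x Pu) /vnorm2 mulr_sumr.
  by apply: ler_sum => i _; apply: ler_wpM2r; [rewrite exprn_ge0|apply: hk].
have unit_delta : vnorm2 (delta_mx k 0 : 'cV[C]_n.+1) = 1.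
  rewrite /vnorm2 (bigD1 k) //= !mxE !eqxx /= normr1 expr1n big1 ?addr0 // => i.
  by move=> /negPf; rewrite !mxE => ->; rewrite normr0 expr0n.
move=> t t0 /(_ (P^t* *m delta_mx k 0)).
rewrite eig vnorm2_unitary ?trmxC_unitary // unit_delta mulr1 => hdk.
by rewrite -(sqrCK t0) ler_sqrtC // qualifE /= ?exprn_ge0.
Qed.

Lemma specnorm_spec m n (A : 'M[C]_(m, n)) : is_specnorm A (specnorm A).
Proof. exact: epsilon_spec (specnorm_exists A). Qed.

Lemma specnorm_ge0 m n (A : 'M[C]_(m, n)) : 0 <= specnorm A.
Proof. by case: (specnorm_spec A). Qed.

Lemma specnorm_ub m n (A : 'M[C]_(m, n)) x :
  vnorm2 (A *m x) <= specnorm A ^+ 2 * vnorm2 x.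
Proof. by case: (specnorm_spec A). Qed.

Lemma specnorm_least m n (A : 'M[C]_(m, n)) t :
  0 <= t -> (forall x, vnorm2 (A *m x) <= t ^+ 2 * vnorm2 x) -> specnorm A <= t.
Proof. by case: (specnorm_spec A) => _ _; apply. Qed.

End SpectralNorm.

Section FilterDiagonalisation.
Variable C : numClosedFieldType.

Lemma pencil_diag n (A B X : 'M[C]_n) (lam : 'rV[C]_n) :
  B \in unitmx -> X \in unitmx -> A *m X = B *m X *m diag_mx lam ->
  invmx B *m A = X *m diag_mx lam *m invmx X.
Proof.
move=> Bu Xu AX; rewrite -[LHS](mulmxK Xu) -(mulmxA (invmx B)) AX.
by rewrite -!mulmxA mulKmx // !mulmxA.
Qed.

Lemma diag_mul n (d e : 'rV[C]_n) :
  diag_mx d *m diag_mx e = diag_mx (\row_j (d 0 j * e 0 j)).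
Proof.
apply/matrixP => i j; rewrite mul_diag_mx !mxE.
by case: eqP => [->|]; rewrite ?mulr1n ?mulr0n ?mulr0.
Qed.

Lemma resolvent_diag n (X : 'M[C]_n) (lam : 'rV[C]_n) z :
  X \in unitmx -> (forall j, z != lam 0 j) ->
  invmx (z *: 1%:M - X *m diag_mx lam *m invmx X)
  = X *m diag_mx (\row_j (z - lam 0 j)^-1) *m invmx X.
Proof.
move=> Xu hz.
have shiftE : z *: 1%:M - X *m diag_mx lam *m invmx X
              = X *m diag_mx (\row_j (z - lam 0 j)) *m invmx X.
  have -> : diag_mx (\row_j (z - lam 0 j)) = z%:M - diag_mx lam.
    by apply/matrixP => i j; rewrite !mxE; case: eqP; rewrite ?mulr1n ?mulr0n ?subr0.
  by rewrite mulmxBr mulmxBl mul_mx_scalar -scalemxAl mulmxV // scalemx1.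
have inv1 : diag_mx (\row_j (z - lam 0 j)) *m diag_mx (\row_j (z - lam 0 j)^-1)
            = 1%:M :> 'M[C]_n.
  by rewrite diag_mul; apply/matrixP => i j; rewrite !mxE mulfV ?subr_eq0.
have prod1 : (z *: 1%:M - X *m diag_mx lam *m invmx X)
             *m (X *m diag_mx (\row_j (z - lam 0 j)^-1) *m invmx X) = 1%:M.
  by rewrite shiftE !mulmxA mulmxKV // -(mulmxA X) inv1 mulmx1 mulmxV.
have [Su _] := mulmx1_unit prod1.
by rewrite -[RHS](mulKmx Su) prod1 mulmx1.
Qed.

Lemma rhoM_diag q n (phi om : 'I_q -> C) (X : 'M[C]_n) (lam : 'rV[C]_n) :
  X \in unitmx -> (forall i, lam 0 i \is Num.real) ->
  (forall k, phi k \notin Num.real) ->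
  rhoM phi om (X *m diag_mx lam *m invmx X)
  = X *m diag_mx (\row_j rho phi om (lam 0 j)) *m invmx X.
Proof.
move=> Xu lr pr.
have nz k j : phi k != lam 0 j by apply: contraNneq (pr k) => ->.
have nz' k j : (phi k)^* != lam 0 j.
  by apply: contraNneq (pr k) => e; rewrite -[phi k]conjCK e (CrealP (lr j)).
pose T (d : 'rV[C]_n) := X *m diag_mx d *m invmx X.
have TZ a d : a *: T d = T (a *: d) by rewrite /T linearZ /= -scalemxAr -scalemxAl.
have TD d e : T d + T e = T (d + e) by rewrite /T raddfD /= mulmxDr mulmxDl.
have Tsum (F : 'I_q -> 'rV[C]_n) : \sum_k T (F k) = T (\sum_k F k).
  by rewrite /T raddf_sum mulmx_sumr mulmx_suml.
rewrite /rhoM; under eq_bigr do rewrite !resolvent_diag // -/T !TZ TD.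
rewrite Tsum; congr T; apply/matrixP => i j; rewrite !mxE summxE /rho.
by apply: eq_bigr => k _; rewrite !mxE.
Qed.

End FilterDiagonalisation.

Local Notation "B ^!" :=
  (orthomx Num.Def.conjC (mx_of_hermitian (hermitian1mx _)) B) : matrix_set_scope.

Section OrthonormalFactorisation.
Variable C : numClosedFieldType.

Lemma gram_unit n m (W : 'M[C]_(n, m)) (G : 'M[C]_(m, n)) :
  G *m W = 1%:M -> adj W *m W \in unitmx.
Proof.
move=> GW; rewrite -row_free_unit; apply/negPn/negP => nf.
have : kermx (adj W *m W) != 0 by rewrite kermx_eq0.
case/matrix0Pn => i [j nz]; set u := row i (kermx (adj W *m W)).
have uH : u *m (adj W *m W) = 0 by rewrite /u -row_mul mulmx_ker row0.
have Wu0 : W *m u^t* = 0.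
  apply: vnorm2_eq0; rewrite vnorm2E trmx_mul map_mxM trmxCK mulmxA -(mulmxA u).
  by rewrite -/(adj W) uH mul0mx mxE.
have u0 : u = 0.
  have := congr1 (fun A => adj (G *m A)) Wu0.
  by rewrite /= mulmxA GW mul1mx mulmx0 adj0 adjK.
by move: u0 nz; rewrite /u => /rowP /(_ j); rewrite !mxE => ->; rewrite eqxx.
Qed.

Lemma complete_unitary m p r (S : 'M[C]_(m, p)) :
  S \is unitarymx -> (m + r)%N = p ->
  exists Sd : 'M[C]_(r, p), col_mx S Sd \is unitarymx.
Proof.
move=> Su hmr.
have hr : \rank (S^!)%MS = r by rewrite rank_ortho (mxrank_unitary Su) -hmr addKn.
case: r / hr in hmr *; exists (schmidt (row_base (S^!)%MS)).
apply/unitarymxP; rewrite tr_col_mx map_row_mx mul_col_row.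
rewrite (unitarymxP Su) (unitarymxP (schmidt_unitarymx _ _)) ?rank_leq_col //.
have nS : S *m (schmidt (row_base (S^!)%MS))^t* = 0.
  apply/orthomx1P; apply: (submx_trans (_ : (S <= S^!^!)%MS)); first by rewrite ortho_id.
  by rewrite submx_ortho eqmx_schmidt_free ?row_base_free // eq_row_base.
have := congr1 (fun A => adj A) nS; rewrite /= adjM adjK adj0 => nS'.
by rewrite nS nS' -scalar_mx_block.
Qed.

Lemma thin_factor p m (c : 'M[C]_(p, m)) :
  (m <= p)%N -> exists (S : 'M[C]_(m, p)) (L : 'M[C]_m),
    S \is unitarymx /\ c = adj S *m L.
Proof.
move=> hmp; pose S := schmidt (adj c).
exists S, (adj (adj c *m pinvmx S)); split; first exact: schmidt_unitarymx.
by rewrite -adjM mulmxKpV ?adjK // schmidt_sub.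
Qed.

(* Re-express Q through a unitary K as Q = Q K^* K, where the column count
   p of Q K^* is written as a sum a (typically m + (p - m)). *)
Lemma unitary_decomp n a p (hp : a = p) (K : 'M[C]_(a, p)) (Q : 'M[C]_(n, p)) :
  K \is unitarymx ->
  castmx (hp, erefl) K \is unitarymx /\
  Q = castmx (erefl n, hp) (Q *m K^t*) *m castmx (hp, erefl) K.
Proof.
case: p / hp in K Q *; rewrite !castmx_id => Ku; split => //.
by rewrite -mulmxA (mulmx1C (unitarymxP Ku)) mulmx1.
Qed.

Lemma orthonormal_factor n p m (Hmp : (m <= p)%N) (B : 'M[C]_n)
    (Q : 'M[C]_(n, p)) (c : 'M[C]_(p, m)) :
  adj Q *m B *m Q = 1%:M -> adj (Q *m c) *m B *m (Q *m c) \in unitmx ->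
  exists (U : 'M[C]_p) (V : 'M[C]_(n, p - m)) (L : 'M[C]_m),
    [/\ U \is unitarymx, L \in unitmx,
        adj L *m L = adj (Q *m c) *m B *m (Q *m c) &
        Q = castmx (erefl n, subnKC Hmp) (row_mx (Q *m c *m invmx L) V) *m U].
Proof.
move=> QB gu; have [S [L [Su cE]]] := thin_factor c Hmp.
have gramL : adj (Q *m c) *m B *m (Q *m c) = adj L *m L.
  rewrite gram_mul QB mulmx1 cE adjM adjK -mulmxA (mulmxA S).
  by rewrite (unitarymxP Su) mul1mx.
have Lu : L \in unitmx by move: gu; rewrite gramL unitmx_mul => /andP[].
have [Sd Ku] := complete_unitary Su (subnKC Hmp).
have [Uu QE] := unitary_decomp (subnKC Hmp) Q Ku.
exists (castmx (subnKC Hmp, erefl) (col_mx S Sd)), (Q *m adj Sd), L; split => //.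
rewrite {1}QE tr_col_mx map_row_mx mul_mx_row cE mulmxA mulmxK //.
Qed.

End OrthonormalFactorisation.

Lemma filtered_coords (R : pzRingType) N m a b (D : 'M[R]_N)
    (S0 : 'M[R]_(N, m)) (Sp : 'M[R]_(N, a)) (Sm : 'M[R]_(N, b))
    (Gm xi : 'M[R]_m) (Gp : 'M[R]_a) (Gm' : 'M[R]_b)
    (E0 E1 : 'M[R]_(a, m)) (F0 F1 zeta : 'M[R]_(b, m)) :
  D *m S0 = S0 *m Gm -> D *m Sp = Sp *m Gp -> D *m Sm = Sm *m Gm' ->
  E1 *m (Gm + xi) = Gp *m E0 -> F1 *m (Gm + xi) = Gm' *m F0 + zeta ->
  D *m (S0 + Sp *m E0 + Sm *m F0) + (S0 *m xi + Sm *m zeta)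
  = (S0 + Sp *m E1 + Sm *m F1) *m (Gm + xi).
Proof.
move=> DS0 DSp DSm E1K F1K.
rewrite !mulmxDl -!mulmxA E1K F1K !mulmxDr !mulmxA DS0 DSp DSm.
rewrite -!addrA; congr (_ + _).
by rewrite [RHS]addrCA; congr (_ + _); exact: addrCA.
Qed.

Section EigenCoordinates.
Variable C : numClosedFieldType.
Variables (N m p : nat).
Hypotheses (Hmp : (m <= p)%N) (HpN : (p <= N)%N).

Definition eig_coords (E : 'M[C]_(N - p, m)) (F : 'M[C]_(N - m, m)) : 'M[C]_(N, m) :=
  sel N 0 m + sel N p (N - p) *m E + sel N m (N - m) *m F.

Lemma eig_coordsE (X : 'M[C]_N) E F :
  subblk 0 0 N m X + subblk 0 p N (N - p) X *m E + subblk 0 m N (N - m) X *m F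
  = X *m eig_coords E F.
Proof. by rewrite !subblk_cols /eig_coords !mulmxDr !mulmxA. Qed.

Lemma eig_coords_top E F : (sel N 0 m)^T *m eig_coords E F = 1%:M.
Proof.
have hmN : (m <= N)%N := leq_trans Hmp HpN.
rewrite /eig_coords !mulmxDr !mulmxA selTsel1 // !selTsel0 //.
by rewrite !mul0mx !addr0.
Qed.

(* ||[I; E; F] x||^2 <= (1 + (||E|| + ||F||)^2) ||x||^2: the identity block
   is orthogonal to the others, which obey the triangle inequality. *)
Lemma eig_coords_norm E F x :
  vnorm2 (eig_coords E F *m x)
  <= (1 + (specnorm E + specnorm F) ^+ 2) * vnorm2 x.
Proof.
have hmN : (m <= N)%N := leq_trans Hmp HpN.
have -> : eig_coords E F *m x
          = sel N 0 m *m x + (sel N p (N - p) *m (E *m x) + sel N m (N - m) *m (F *m x)).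
  by rewrite /eig_coords !mulmxDl -addrA !mulmxA.
rewrite vnorm2_orth; last first.
  rewrite trmx_mul map_mxM selC mulmxDr !mulmxA -!mulmxA !(mulmxA (sel N 0 m)^T).
  by rewrite !selTsel0 // !mul0mx !mulmx0 addr0.
rewrite vnorm2_sel // mulrDl mul1r lerD2l.
apply: vnorm2_add; rewrite ?specnorm_ge0 ?vnorm2_ge0 //.
  by rewrite vnorm2_sel ?subnKC //; exact: specnorm_ub.
by rewrite vnorm2_sel ?subnKC ?(leq_trans Hmp) //; exact: specnorm_ub.
Qed.

End EigenCoordinates.

Unset Implicit Arguments.

Theorem lemma1 (C : numClosedFieldType) (n p m q : nat)
  (* the pencil (A, B): A Hermitian, B = Cb^* Cb with Cb invertible *)
  (A B Cb : 'M[C]_n)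
  (HA : adj A = A) (HCb : Cb \in unitmx) (HB : B = adj Cb *m Cb)
  (* B-orthonormal eigenvectors X with real eigenvalues lam *)
  (X : 'M[C]_n) (lam : 'rV[C]_n)
  (HXB : adj X *m B *m X = 1%:M)
  (HAX : A *m X = B *m X *m diag_mx lam)
  (Hlam : forall i, lam 0 i \is Num.real)
  (* the rational filter: q nodes phi_k (off the real axis) and weights om_k *)
  (phi om : 'I_q -> C) (Hphi : forall k, phi k \notin Num.real)
  (* eigenpairs numbered so that |gamma_1| >= ... >= |gamma_n| *)
  (Hord : forall i j : 'I_n, (i <= j)%N ->
            `|rho phi om (lam 0 j)| <= `|rho phi om (lam 0 i)|)
  (Hpn : (p < n)%N) (Hmp : (m <= p)%N)
  (* the previous iterate Q_{k-1} *)
  (U0 : 'M[C]_p) (L0 : 'M[C]_m) (E0 : 'M[C]_(n - p, m)) (F0 : 'M[C]_(n - m, m))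
  (V0 : 'M[C]_(n, p - m))
  (HU0 : U0 \in unitmx) (HL0 : L0 \in unitmx)
  (* the error matrix Delta_{k-1} *)
  (Delta : 'M[C]_(n, p))
  (* the Rayleigh-Ritz step *)
  (Xh : 'M[C]_p) (lamh : 'rV[C]_p) :
  let M := invmx B *m A in
  let gam := fun j : 'I_n => rho phi om (lam 0 j) in
  let Gm := diagblk 0 m gam in
  let Gp' := diagblk p (n - p) gam in
  let Gm' := diagblk m (n - m) gam in
  let Xm := subblk 0 0 n m X in
  let Xp' := subblk 0 p n (n - p) X in
  let Xm' := subblk 0 m n (n - m) X in
  let Q0 := castmx (erefl n, subnKC Hmp)
              (row_mx ((Xm + Xp' *m E0 + Xm' *m F0) *m invmx L0) V0) *m U0 in
  let Z := invmx X *m Delta *m invmx U0 *m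
             castmx (subnKC Hmp, subnKC Hmp) (block_mx L0 0 0 1%:M) in
  let xi := subblk 0 0 m m Z in
  let zeta := subblk m 0 (n - m) m Z in
  let Y := rhoM phi om M *m Q0 + Delta in
  let Ah := adj Y *m A *m Y in
  let Bh := adj Y *m B *m Y in
  let Q1 := Y *m Xh in
  let E1 := Gp' *m E0 *m invmx (Gm + xi) in
  let F1 := Gm' *m F0 *m invmx (Gm + xi) + zeta *m invmx (Gm + xi) in
  let W1 := Xm + Xp' *m E1 + Xm' *m F1 in
  Ah *m Xh = Bh *m Xh *m diag_mx lamh ->
  adj Xh *m Bh *m Xh = 1%:M ->
  Gm + xi \in unitmx ->
  \rank Y = p ->
  exists (U1 : 'M[C]_p) (V1 : 'M[C]_(n, p - m)) (L1 : 'M[C]_m),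
    [/\ U1 \is unitarymx,
        L1 \in unitmx,
        adj L1 *m L1 = adj W1 *m B *m W1,
        specnorm L1 <= sqrtC (1 + (specnorm E1 + specnorm F1) ^+ 2) &
        Q1 = castmx (erefl n, subnKC Hmp) (row_mx (W1 *m invmx L1) V1) *m U1].
Proof.
move=> M gam Gm Gp' Gm' Xm Xp' Xm' Q0 Z xi zeta Y Ah Bh Q1 E1 F1 W1 _ hXh Ku _.
have Xu : X \in unitmx by case: (mulmx1_unit HXB).
have Xhu : Xh \in unitmx by case: (mulmx1_unit hXh).
have Bu : B \in unitmx by rewrite HB unitmx_mul /adj map_unitmx unitmx_tr HCb.
have HpN := ltnW Hpn; have HmN := leq_trans Hmp HpN.
pose C0 := eig_coords E0 F0; pose C1 := eig_coords E1 F1.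
have W1E : W1 = X *m C1 by exact: eig_coordsE.
pose e := invmx U0 *m castmx (subnKC Hmp, subnKC Hmp) (block_mx L0 0 0 1%:M)
          *m sel p 0 m.
have Q0e : Q0 *m e = X *m C0.
  by rewrite /Q0 /e !mulmxA mulmxK // first_block_columns mulmxKV // eig_coordsE.
have De : Delta *m e = X *m (sel n 0 m *m xi + sel n m (n - m) *m zeta).
  rewrite /xi /zeta !subblkE !mulmxA -!mulmxDl sel_split // mul1mx /Z /e.
  by rewrite !mulmxA mulmxV // mul1mx.
have YeW : Y *m e = W1 *m (Gm + xi).
  rewrite /Y mulmxDl -mulmxA Q0e De /M (pencil_diag Bu Xu HAX) rhoM_diag //.
  rewrite -!mulmxA mulKmx // -mulmxDr W1E -mulmxA.
  congr (X *m _); apply: filtered_coords; try exact: diag_sel.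
    by rewrite mulmxKV.
  by rewrite mulmxDl !mulmxKV.
clearbody e.
(* hence W1 lies in the range of the B-orthonormal Q1 *)
have W1Q : W1 = Q1 *m (invmx Xh *m e *m invmx (Gm + xi)).
  by rewrite /Q1 !mulmxA (mulmxK Xhu) YeW (mulmxK Ku).
have Q1B : adj Q1 *m B *m Q1 = 1%:M by rewrite gram_mul.
have gramW1 : adj W1 *m B *m W1 = adj C1 *m C1 by rewrite W1E gram_mul HXB mulmx1.
have gramW1u : adj W1 *m B *m W1 \in unitmx.
  by rewrite gramW1; apply: (gram_unit (G := (sel n 0 m)^T)); exact: eig_coords_top.
rewrite W1Q in gramW1u.
have [U1 [V1 [L1 [U1u L1u LL Q1E]]]] := orthonormal_factor Hmp Q1B gramW1u.
rewrite -W1Q in LL Q1E; exists U1, V1, L1; split => //.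
apply: specnorm_least => [|x].
  by rewrite sqrtC_ge0 addr_ge0 ?exprn_ge0 ?addr_ge0 ?specnorm_ge0.
rewrite sqrtCK (vnorm2_gram x (etrans LL gramW1)).
exact: eig_coords_norm.
Qed.
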